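(* Let $\mathbb{T}$ be a time scale and $f:\mathbb{T}\to\mathbb{R}$, $f(t)=t$. Then for $\alpha\in]0,1]$ and $t\in\mathbb{T}_\kappa$, $$f^{\nabla^\alpha}(t)=\begin{cases}[t-\rho(t)]^{1-\alpha}&\text{if }\alpha\neq1,\\ 1&\text{if }\alpha=1.\end{cases}$$
   Context: A time scale $\mathbb{T}$ is a nonempty closed subset of $\mathbb{R}$. $\rho(t)=\sup\{s\in\mathbb{T}: s<t\}$ (with $\sup\emptyset=\inf\mathbb{T}$), $\sigma(t)=\inf\{s\in\mathbb{T}:s>t\}$ (with $\inf\emptyset=\sup\mathbb{T}$), $f^\rho=f\circ\rho$. $\mathbb{T}_\kappa=\mathbb{T}\setminus\{\inf\mathbb{T}\}$ if $\inf\mathbb{T}$ is finite with $\sigma(\inf\mathbb{T})>\inf\mathbb{T}$, otherwise $\mathbb{T}_\kappa=\mathbb{T}$. $0^{\gamma}=0$ for $\gamma>0$. Let $A=\,]0,1]\cap\{1/q: q\text{ odd positive integer}\}$; for $\alpha=1/q\in A$, $x^\alpha$ is the real $q$-th root. For $t\in\mathbb{T}_\kappa$, $f^{\nabla^\alpha}(t)$ is the real number (if it exists) such that for every $\varepsilon>0$ there is $\delta>0$ with $\big|[f(s)-f^\rho(t)]-f^{\nabla^\alpha}(t)[s-\rho(t)]^\alpha\big|\le\varepsilon|s-\rho(t)|^\alpha$ for all $s\in\,]t-\delta,t+\delta[\,\cap\mathbb{T}$ if $\alpha\in A$, resp. all $s\in[t,t+\delta[\,\cap\mathbb{T}$ if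 $\alpha\notin A$ (the nabla fractional derivative of order $\alpha$). *)

From HB Require Import structures.
From mathcomp Require Import all_boot all_order all_algebra.
From mathcomp Require Import all_classical all_reals all_analysis.
Set Implicit Arguments. Unset Strict Implicit. Unset Printing Implicit Defensive.
Import Order.TTheory GRing.Theory Num.Theory.
Import numFieldNormedType.Exports.
Local Open Scope classical_set_scope.
Local Open Scope ring_scope.

Section TimeScales.
Variable R : realType.

Definition time_scale (T : set R) : Prop := T !=set0 /\ closed T.

Definition rho (T : set R) (t : R) : R :=
  let S := [set s | T s /\ s < t] in
  if `[< S = set0 >] then inf T else sup S.

Definition sigma (T : set R) (t : R) : R :=
  let S := [set s | T s /\ t < s] in
  if `[< S = set0 >] then sup T else inf S.

Definition T_kappa (T : set R) : set R :=
  if `[< has_lbound T /\ inf T < sigma T (inf T) >] then T `\ inf T else T.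

Definition setA : set R :=
  [set a | 0 < a <= 1 /\ exists q : nat, (0 < q)%N /\ odd q /\ a = (q%:R)^-1].

(* x^gamma: for x >= 0 the usual power (0^gamma = 0 for gamma > 0);
   for x < 0 and gamma = 1/q in A, the real q-th root, i.e. -((-x)^gamma);
   for x < 0 and gamma not in A it is never used (set to 0). *)
Definition fpow (gamma x : R) : R :=
  if 0 <= x then powR x gamma
  else if `[< setA gamma >] then - powR (- x) gamma else 0.

Definition is_nabla_frac_deriv (T : set R) (f : R -> R) (alpha t L : R) : Prop :=
  forall eps : R, 0 < eps -> exists2 delta : R, 0 < delta &
    forall s : R, T s ->
      (if `[< setA alpha >] then `|s - t| < delta else t <= s < t + delta) ->
      `| (f s - f (rho T t)) - L * fpow alpha (s - rho T t) |
        <= eps * fpow alpha `|s - rho T t|.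

End TimeScales.

From HB Require Import structures.
From mathcomp Require Import all_boot all_order all_algebra.
From mathcomp Require Import all_classical all_reals all_analysis.
From mathcomp Require Import lra.
Import Order.TTheory GRing.Theory Num.Theory.
Local Open Scope classical_set_scope.
Local Open Scope ring_scope.

(* With u := s - rho t and c := t - rho t, the quantity to bound is
   |u - c^(1-a) u^a| = u^a (u^(1-a) - c^(1-a)), and subadditivity of x |-> x^(1-a)
   bounds the last factor by (u - c)^(1-a) = (s - t)^(1-a), which is small.  When t
   is left-dense, c = 0 and the same estimate reads |s - t| <= eps |s - t|^a. *)

Section Rho.
Context {R : realType} {T : set R} {t : R}.
Hypothesis Tt : T t.

Lemma rho_le : rho T t <= t.
Proof.
rewrite /rho; case: asboolP => [S0|/eqP/set0P Sn]; first last.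
  by apply: ge_sup => // s [_ /ltW].
apply: ge_inf => //; exists t => s Ts; rewrite leNgt; apply/negP => st.
by have : [set s | T s /\ s < t] s by []; rewrite S0.
Qed.

Lemma le_rho {s : R} : T s -> s < t -> s <= rho T t.
Proof.
move=> Ts st; have Ss : [set s | T s /\ s < t] s by [].
rewrite /rho; case: asboolP => [S0|_]; first by move: Ss; rewrite S0.
by apply: ub_le_sup => //; exists t => x [_ /ltW].
Qed.

End Rho.

Lemma T_kappa_sub (R : realType) (T : set R) : T_kappa T `<=` T.
Proof. by rewrite /T_kappa; case: asboolP => _ // x []. Qed.

Section PowerInequalities.
Context {R : realType} {b : R}.
Hypothesis b_gt0 : 0 < b.
Hypothesis b_le1 : b <= 1.

Lemma ler_id_powR {x : R} : 0 <= x <= 1 -> x <= x `^ b.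
Proof.
case/andP=> x0 x1; have [->|xn0] := eqVneq x 0; first by rewrite powR_ge0.
by apply: ger1_powR => //; rewrite lt_neqAle eq_sym xn0 x0.
Qed.

(* Dividing by u := c + d reduces the claim to 1 <= (c/u)^b + (d/u)^b,
   where c/u + d/u = 1 and x <= x^b on [0, 1]. *)
Lemma powRD_le (c d : R) : 0 <= c -> 0 <= d -> (c + d) `^ b <= c `^ b + d `^ b.
Proof.
move=> c0 d0; set u := c + d.
have [u0|u_neq0] := eqVneq u 0.
  by rewrite u0 powR0 ?gt_eqF // addr_ge0 ?powR_ge0.
have u_gt0 : 0 < u by rewrite lt_neqAle eq_sym u_neq0 addr_ge0.
have frac_unit x : 0 <= x <= u -> 0 <= x / u <= 1.
  by case/andP=> x0 xu; rewrite divr_ge0 ?(ltW u_gt0) //= ler_pdivrMr // mul1r.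
have cu : 0 <= c / u <= 1 by apply: frac_unit; rewrite c0 lerDl.
have du : 0 <= d / u <= 1 by apply: frac_unit; rewrite d0 lerDr.
rewrite -[c in c `^ b + _](divfK u_neq0) -[d in _ + d `^ b](divfK u_neq0).
rewrite (powRM _ (andP cu).1 (ltW u_gt0)) (powRM _ (andP du).1 (ltW u_gt0)).
rewrite -mulrDl -[X in X <= _]mul1r ler_wpM2r ?powR_ge0 //.
apply: le_trans _ (lerD (ler_id_powR cu) (ler_id_powR du)).
by rewrite -mulrDl divff.
Qed.

Lemma powRB_le {c u : R} : 0 <= c <= u -> u `^ b - c `^ b <= (u - c) `^ b.
Proof.
case/andP=> c0 cu; rewrite lerBlDl.
by rewrite -{1}(subrKC c u) powRD_le // subr_ge0.
Qed.

End PowerInequalities.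

Lemma powR_le_root (R : realType) (b e x : R) :
  0 < b -> 0 <= e -> 0 <= x <= e `^ b^-1 -> x `^ b <= e.
Proof.
move=> b0 e0 /andP[x0 xd].
rewrite -[leRHS](powRr1 e0) -[1](mulVf (lt0r_neq0 b0)) powRrM.
by apply: ge0_ler_powR; rewrite ?nnegrE ?powR_ge0 ?(ltW b0).
Qed.

Lemma frac_increment_bound (R : realType) (a c u eps : R) :
  0 < a < 1 -> 0 <= c <= u -> (u - c) `^ (1 - a) <= eps ->
  `|u - c `^ (1 - a) * u `^ a| <= eps * u `^ a.
Proof.
case/andP=> a0 a1 /andP[c0 cu] small.
have b0 : 0 < 1 - a by rewrite subr_gt0.
have b1 : 1 - a <= 1 by rewrite gerBl ltW.
have u0 : 0 <= u := le_trans c0 cu.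
have u_split : u = u `^ (1 - a) * u `^ a.
  by rewrite -powRD subrK ?powRr1 // oner_eq0.
rewrite [X in `|X - _|]u_split -mulrBl normrM [`|u `^ a|]ger0_norm ?powR_ge0 //.
rewrite ler_wpM2r ?powR_ge0 // ger0_norm; last first.
  by rewrite subr_ge0; apply: ge0_ler_powR; rewrite ?nnegrE ?(ltW b0).
exact: le_trans (powRB_le b0 b1 (introT andP (conj c0 cu))) small.
Qed.

Lemma fpow_nneg (R : realType) (g x : R) : 0 <= x -> fpow g x = x `^ g.
Proof. by move=> x0; rewrite /fpow x0. Qed.

Lemma setA1 (R : realType) : setA (1 : R).
Proof. by split; [rewrite ltr01 lexx | exists 1%N; rewrite invr1]. Qed.

Lemma fpow1 (R : realType) (x : R) : fpow 1 x = x.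
Proof.
rewrite /fpow; case: ifPn => [x0|]; first by rewrite powRr1.
by rewrite -ltNge (asboolT (setA1 R)) => /ltW x0; rewrite powRr1 ?opprK // oppr_ge0.
Qed.

Lemma nabla_window_dist (R : realType) (a t s delta : R) :
  (if `[< setA a >] then `|s - t| < delta else t <= s < t + delta) ->
  `|s - t| < delta.
Proof.
case: ifP => // _ /andP[ts sd].
by rewrite ger0_norm ?subr_ge0 // ltrBlDl.
Qed.

Section NablaFracDerivId.
Variables (R : realType) (T : set R) (t : R).

Lemma nabla_frac_deriv_id_order1 : is_nabla_frac_deriv T id 1 t 1.
Proof.
move=> eps eps0; exists 1 => // s _ _.
by rewrite !fpow1 mul1r subrr normr0 mulr_ge0 ?(ltW eps0).
Qed.

Variable alpha : R.
Hypothesis alpha_gt0 : 0 < alpha.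
Hypothesis alpha_lt1 : alpha < 1.

Let beta_gt0 : 0 < 1 - alpha.
Proof. by rewrite subr_gt0. Qed.

Lemma nabla_frac_deriv_id_left_scattered : rho T t < t ->
  is_nabla_frac_deriv T id alpha t ((t - rho T t) `^ (1 - alpha)).
Proof.
move=> rt eps eps0; set r := rho T t; set d := eps `^ (1 - alpha)^-1.
exists (Num.min d (t - r)); first by rewrite lt_min powR_gt0 // subr_gt0.
move=> s Ts /nabla_window_dist; rewrite lt_min => /andP[sd sr].
have ts : t <= s.
  rewrite leNgt; apply/negP => st; have := le_rho Ts st.
  by move: sr; rewrite -/r ltr0_norm ?subr_lt0 //; lra.
rewrite /= [`|s - r|]ger0_norm ?fpow_nneg ?subr_ge0 ?(le_trans (ltW rt)) //.
apply: frac_increment_bound; first by rewrite alpha_gt0.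
  by rewrite subr_ge0 ltW //= lerD2r.
rewrite opprB addrA subrK powR_le_root ?(ltW eps0) // subr_ge0 ts /=.
exact: le_trans (ler_norm _) (ltW sd).
Qed.

Lemma nabla_frac_deriv_id_left_dense : rho T t = t ->
  is_nabla_frac_deriv T id alpha t 0.
Proof.
move=> rt eps eps0; set d := eps `^ (1 - alpha)^-1.
exists d; first exact: powR_gt0.
move=> s _ /nabla_window_dist sd; rewrite /= rt mul0r subr0 fpow_nneg //.
have := @frac_increment_bound _ alpha 0 `|s - t| eps.
rewrite powR0 ?gt_eqF // mul0r !subr0 normr_id; apply.
- by rewrite alpha_gt0.
- by rewrite lexx normr_ge0.
- by rewrite powR_le_root ?normr_ge0 ?(ltW eps0) ?(ltW sd).
Qed.

End NablaFracDerivId.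

Theorem proposition3p6 (R : realType) (T : set R) (alpha t : R) :
  time_scale T -> 0 < alpha <= 1 -> T_kappa T t ->
  is_nabla_frac_deriv T (fun x : R => x) alpha t
    (if alpha != 1 then fpow (1 - alpha) (t - rho T t) else 1).
Proof.
move=> _ /andP[alpha_gt0 alpha_le1] /T_kappa_sub Tt.
have [->|alpha_neq1] := eqVneq alpha 1; first exact: nabla_frac_deriv_id_order1.
have alpha_lt1 : alpha < 1 by rewrite lt_neqAle alpha_neq1.
rewrite fpow_nneg ?subr_ge0 ?(rho_le Tt) //.
have [rt|tr] := ltP (rho T t) t; first exact: nabla_frac_deriv_id_left_scattered.
have rt : rho T t = t by apply/le_anti; rewrite (rho_le Tt).
rewrite rt subrr powR0 ?gt_eqF ?subr_gt0 //.
exact: nabla_frac_deriv_id_left_dense.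
Qed.
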